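(* Consider ${\sf BubbleRank}$ (defined below) run with parameter $\delta\in(0,1)$ in a stochastic click bandit satisfying A1–A5 with $\alpha(1)>\dots>\alpha(K)>0$. For $t\in[n]$ let $$\mathbf{P}_t=\{(i,j)\in[K]^2: i<j,\ |\bar{\mathbf{R}}_t^{-1}(i)-\bar{\mathbf{R}}_t^{-1}(j)|=1,\ \mathbf{s}_{t-1}(i,j)\le2\sqrt{\mathbf{n}_{t-1}(i,j)\log(1/\delta)}\}$$ and let $\mathbf{\Delta}_t$ be the maximum of the attraction gap $\Delta(\mathcal{R})$ over all lists $\mathcal{R}$ that ${\sf BubbleRank}$ may display at time $t$ (over its randomization). Then on the event $\mathcal{E}$ defined below, for every $t\in[n]$, $$\mathbf{\Delta}_t\le3\sum_{i=1}^K\sum_{j=i+1}^K\mathbb{1}\{(i,j)\in\mathbf{P}_t\}(\alpha(i)-\alpha(j)).$$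
   Context: Model. Items $[K]$; a list $\mathcal{R}$ orders all $K$ items, $\mathcal{R}(k)$ is the item at position $k$, $\mathcal{R}^{-1}(i)$ the position of $i$; $\Pi_K$ the set of lists. At time $t$, $(\mathbf{A}_t,\mathbf{X}_t)\in\{0,1\}^K\times\{0,1\}^{\Pi_K\times[K]}$ is drawn i.i.d. from a product distribution; the learner displays $\mathbf{R}_t$ and observes $\mathbf{c}_t(k)=\mathbf{X}_t(\mathbf{R}_t,k)\mathbf{A}_t(\mathbf{R}_t(k))$. $\alpha=\mathbb{E}[\mathbf{A}_t]$, $\chi=\mathbb{E}[\mathbf{X}_t]$, $r(\mathcal{R},\alpha,\chi)=\sum_k\chi(\mathcal{R},k)\alpha(\mathcal{R}(k))$, $\mathcal{R}^*=(1,\dots,K)$. Assumptions for all lists $\mathcal{R},\mathcal{R}'$ and positions $k<\ell$: (A1) $r(\mathcal{R},\alpha,\chi)\le r(\mathcal{R}^*,\alpha,\chi)$; (A2) $\{\mathcal{R}(1..k-1)\}=\{\mathcal{R}'(1..k-1)\}\Rightarrow\chi(\mathcal{R},k)=\chi(\mathcal{R}',k)$; (A3) $\chi(\mathcal{R},k)\ge\chi(\mathcal{R},\ell)$; (A4) if $\mathcal{R},\mathcal{R}'$ differ only by exchanging items at positions $k,\ell$, then $\alpha(\mathcal{R}(k))\le\alpha(\mathcal{R}(\ell))\iff\chi(\mathcal{R},\ell)\ge\chi(\mathcal{R}',\ell)$; (A5) $\chi(\mathcal{R},k)\ge\chi(\mathcal{R}^*,k)$. Attraction gap: $\Delta(\mathcal{R})=\sum_{k=1}^{K-1}\max\{\alpha(\mathcal{R}(k+1))-\alpha(\mathcal{R}(k)),0\}$.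 Algorithm ${\sf BubbleRank}$ (initial list $\mathcal{R}_0$, horizon $n$): $\mathbf{s}_0\equiv\mathbf{n}_0\equiv0$, $\bar{\mathbf{R}}_1=\mathcal{R}_0$. For $t=1,\dots,n$: $h=t\bmod2$, $\mathbf{R}_t\leftarrow\bar{\mathbf{R}}_t$; for $k=1,\dots,\lfloor(K-h)/2\rfloor$ with $i=\mathbf{R}_t(2k-1+h)$, $j=\mathbf{R}_t(2k+h)$: if $\mathbf{s}_{t-1}(i,j)\le2\sqrt{\mathbf{n}_{t-1}(i,j)\log(1/\delta)}$ exchange these two positions with probability $1/2$. Display $\mathbf{R}_t$, observe $\mathbf{c}_t$. $\mathbf{s}_t=\mathbf{s}_{t-1}$, $\mathbf{n}_t=\mathbf{n}_{t-1}$; for each such $k$ with $i=\mathbf{R}_t(2k-1+h)$, $j=\mathbf{R}_t(2k+h)$: if $|\mathbf{c}_t(2k-1+h)-\mathbf{c}_t(2k+h)|=1$, add $\mathbf{c}_t(2k-1+h)-\mathbf{c}_t(2k+h)$ to $\mathbf{s}_t(i,j)$, its negative to $\mathbf{s}_t(j,i)$, and $1$ to $\mathbf{n}_t(i,j),\mathbf{n}_t(j,i)$. Then $\bar{\mathbf{R}}_{t+1}=\bar{\mathbf{R}}_t$; for $k=1,\dots,K-1$ in order with $i=\bar{\mathbf{R}}_{t+1}(k)$, $j=\bar{\mathbf{R}}_{t+1}(k+1)$: if $\mathbf{s}_t(j,i)>2\sqrt{\mathbf{n}_t(j,i)\log(1/\delta)}$ exchange positions $k,k+1$ of $\bar{\mathbf{R}}_{t+1}$.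 Event $\mathcal{E}=\bigcap_{t\in[n]}(\mathcal{E}_{t,1}\cap\mathcal{E}_{t,2})$, where $\mathcal{E}_{t,1}$: for all $i<j$, $\frac{\alpha(i)-\alpha(j)}{\alpha(i)+\alpha(j)}\mathbf{n}_t(i,j)-2\sqrt{\mathbf{n}_t(i,j)\log(1/\delta)}\le\mathbf{s}_t(i,j)$; and $\mathcal{E}_{t,2}$: for all $i>j$, $\mathbf{s}_t(i,j)\le2\sqrt{\mathbf{n}_t(i,j)\log(1/\delta)}$. *)

From HB Require Import structures.
From mathcomp Require Import all_boot all_order all_algebra all_fingroup.
From mathcomp Require Import reals exp.
Set Implicit Arguments. Unset Strict Implicit. Unset Printing Implicit Defensive.
Import Order.TTheory GRing.Theory Num.Theory.
Local Open Scope ring_scope.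

(* Items are 'I_K (item i+1 of the paper = ordinal i); positions are 'I_K
   (position k+1 of the paper = ordinal k). A list is a permutation
   L : {perm 'I_K}, L k = item at position k, L^-1 i = position of item i. *)

Section BubbleRank.
Variable R : realType.
Variable K : nat.

Definition Aspace := {ffun 'I_K -> bool}.
Definition Xspace := {ffun ({perm 'I_K} * 'I_K) -> bool}.

Definition is_distr (T : finType) (p : T -> R) :=
  (forall t, 0 <= p t) /\ \sum_(t : T) p t = 1.

Definition alpha_of (pA : Aspace -> R) (i : 'I_K) : R :=
  \sum_(a : Aspace) pA a * (a i)%:R.
Definition chi_of (pX : Xspace -> R) (L : {perm 'I_K}) (k : 'I_K) : R :=
  \sum_(x : Xspace) pX x * (x (L, k))%:R.

Definition reward (alpha : 'I_K -> R) (chi : {perm 'I_K} -> 'I_K -> R)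
  (L : {perm 'I_K}) : R := \sum_(k : 'I_K) chi L k * alpha (L k).

Definition Rstar : {perm 'I_K} := 1%g.

(* list obtained by exchanging the items at positions p and q *)
Definition swap (L : {perm 'I_K}) (p q : 'I_K) : {perm 'I_K} := (tperm p q * L)%g.

Definition prefix_items (L : {perm 'I_K}) (k : 'I_K) : {set 'I_K} :=
  [set L j | j : 'I_K & (j < k)%N].

Definition A1 (alpha : 'I_K -> R) (chi : {perm 'I_K} -> 'I_K -> R) := forall L : {perm 'I_K}, reward alpha chi L <= reward alpha chi Rstar.
Definition A2 (chi : {perm 'I_K} -> 'I_K -> R) := forall (L L' : {perm 'I_K}) (k : 'I_K),
  prefix_items L k = prefix_items L' k -> chi L k = chi L' k.
Definition A3 (chi : {perm 'I_K} -> 'I_K -> R) := forall (L : {perm 'I_K}) (k l : 'I_K),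
  (k < l)%N -> chi L l <= chi L k.
Definition A4 (alpha : 'I_K -> R) (chi : {perm 'I_K} -> 'I_K -> R) :=
  forall (L : {perm 'I_K}) (k l : 'I_K), (k < l)%N ->
  (alpha (L k) <= alpha (L l) <-> chi (swap L k l) l <= chi L l).
Definition A5 (chi : {perm 'I_K} -> 'I_K -> R) := forall (L : {perm 'I_K}) (k : 'I_K), chi Rstar k <= chi L k.

Definition nxt (k : 'I_K) : 'I_K := insubd k k.+1.
Definition attraction_gap (alpha : 'I_K -> R) (L : {perm 'I_K}) : R :=
  \sum_(k : 'I_K | (k.+1 < K)%N) Num.max (alpha (L (nxt k)) - alpha (L k)) 0.

Definition thr (delta : R) (m : nat) : R := 2 * Num.sqrt (m%:R * ln (delta^-1)).

Record state := State {
  rbar : {perm 'I_K};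
  sst : 'I_K -> 'I_K -> int;
  nst : 'I_K -> 'I_K -> nat }.

Definition init_state (R0 : {perm 'I_K}) : state :=
  State R0 (fun _ _ => 0%R) (fun _ _ => 0%N).

Definition uncertain (delta : R) (s : 'I_K -> 'I_K -> int)
  (n : 'I_K -> 'I_K -> nat) (i j : 'I_K) : bool :=
  (s i j)%:~R <= thr delta (n i j).

(* positions 2k-1+h (paper, 1-indexed), k = 1..floor((K-h)/2):
   0-indexed positions p with p = h mod 2 and p+1 < K *)
Definition active (h : nat) (k : 'I_K) : bool := ((k %% 2 == h) && (k.+1 < K))%N.

Definition display (delta : R) (Rb : {perm 'I_K}) (s : 'I_K -> 'I_K -> int)
  (n : 'I_K -> 'I_K -> nat) (h : nat) (bt : {ffun 'I_K -> bool}) : {perm 'I_K} :=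
  foldl (fun (L : {perm 'I_K}) (k : 'I_K) =>
    if active h k && uncertain delta s n (L k) (L (nxt k)) && bt k
    then swap L k (nxt k) else L) Rb (enum 'I_K).

Definition upd_stats (h : nat) (L : {perm 'I_K}) (c : 'I_K -> int)
  (sn : ('I_K -> 'I_K -> int) * ('I_K -> 'I_K -> nat)) :=
  foldl (fun sn (k : 'I_K) =>
    let: (s, n) := sn in
    if active h k && (`|c k - c (nxt k)| == 1)
    then let i := L k in let j := L (nxt k) in let d := c k - c (nxt k) in
      ((fun u v => if (u == i) && (v == j) then s u v + d
                   else if (u == j) && (v == i) then s u v - d else s u v),
       (fun u v => if ((u == i) && (v == j)) || ((u == j) && (v == i))
                   then (n u v).+1 else n u v))
    else (s, n)) sn (enum 'I_K).

Definition upd_rbar (delta : R) (s : 'I_K -> 'I_K -> int) (n : 'I_K -> 'I_K -> nat)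
  (Rb : {perm 'I_K}) : {perm 'I_K} :=
  foldl (fun (L : {perm 'I_K}) (k : 'I_K) =>
    if (k.+1 < K)%N && (thr delta (n (L (nxt k)) (L k)) < (s (L (nxt k)) (L k))%:~R)
    then swap L k (nxt k) else L) Rb (enum 'I_K).

Definition step (delta : R) (t : nat) (st : state) (bt : {ffun 'I_K -> bool})
  (a : Aspace) (x : Xspace) : state :=
  let h := (t %% 2)%N in
  let L := display delta (rbar st) (sst st) (nst st) h bt in
  let c := fun k : 'I_K => ((x (L, k) && a (L k)) : nat)%:Z in
  let sn := upd_stats h L c (sst st, nst st) in
  State (upd_rbar delta sn.1 sn.2 (rbar st)) sn.1 sn.2.

(* traj t = (\bar R_{t+1}, s_t, n_t) *)
Fixpoint traj (delta : R) (R0 : {perm 'I_K}) (coins : nat -> {ffun 'I_K -> bool})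
  (as_ : nat -> Aspace) (xs : nat -> Xspace) (t : nat) : state :=
  match t with
  | 0 => init_state R0
  | t'.+1 => step delta t'.+1 (traj delta R0 coins as_ xs t') (coins t'.+1)
               (as_ t'.+1) (xs t'.+1)
  end.

Definition E1 (delta : R) (alpha : 'I_K -> R) (st : state) :=
  forall i j : 'I_K, (i < j)%N ->
    (alpha i - alpha j) / (alpha i + alpha j) * (nst st i j)%:R
      - thr delta (nst st i j) <= (sst st i j)%:~R.
Definition E2 (delta : R) (st : state) :=
  forall i j : 'I_K, (j < i)%N -> (sst st i j)%:~R <= thr delta (nst st i j).

(* P_t, with st = traj (t-1) = (\bar R_t, s_{t-1}, n_{t-1}) *)
Definition inP (delta : R) (st : state) (i j : 'I_K) : bool :=
  [&& (i < j)%N,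
      (`| ((perm_inv (rbar st) i : nat)%:Z - (perm_inv (rbar st) j : nat)%:Z) |%N == 1)%N
    & uncertain delta (sst st) (nst st) i j].

Definition Delta_t (delta : R) (alpha : 'I_K -> R) (t : nat) (st : state) : R :=
  \big[Num.max/0]_(bt : {ffun 'I_K -> bool})
     attraction_gap alpha (display delta (rbar st) (sst st) (nst st) (t %% 2)%N bt).

End BubbleRank.

From HB Require Import structures.
From mathcomp Require Import all_boot all_order all_algebra all_fingroup.
From mathcomp Require Import reals exp zify lra.
Import Order.TTheory GRing.Theory Num.Theory.
Local Open Scope ring_scope.

Set Implicit Arguments. Unset Strict Implicit. Unset Printing Implicit Defensive.

(* Along every run, the ranking rbar puts i before j whenever the statistics
   are confident that i is more attractive, s(i,j) > 2 sqrt(n(i,j) log(1/δ)).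
   Indeed, the statistics of a pair change only when the pair is displayed at
   two adjacent positions of the current parity, and rbar is then re-ranked
   by disjoint adjacent transpositions at exactly those positions.  Hence an
   adjacent pair of rbar that is inverted is uncertain, i.e. it is in P_t; so
   is every pair that the display swaps.  The displayed list differs from rbar
   by disjoint adjacent transpositions, so its items at positions k and k+1
   come from positions k-1..k and k+1..k+2 of rbar: telescoping bounds each
   term of the attraction gap by the weights of the pairs of P_t at positions
   k-1, k and k+1, and summing over k gives the factor 3. *)

Section Positions.
Variable K : nat.
Implicit Types k l x : 'I_K.

Definition prv k : 'I_K := insubd k k.-1.

Lemma val_nxt k : (k.+1 < K)%N -> nxt k = k.+1 :> nat.
Proof. by move=> kK; rewrite /nxt val_insubd kK. Qed.

Lemma val_prv k : prv k = k.-1 :> nat.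
Proof. by rewrite /prv val_insubd; case: ifP => //; have := ltn_ord k; lia. Qed.

Lemma prv_nxt k : (k.+1 < K)%N -> prv (nxt k) = k.
Proof. by move=> kK; apply: val_inj; rewrite /= val_prv val_nxt. Qed.

Lemma nxt_prv k : (0 < k)%N -> nxt (prv k) = k.
Proof.
move=> k0; have kK : ((prv k).+1 < K)%N by rewrite val_prv; have := ltn_ord k; lia.
by apply: val_inj; rewrite /= val_nxt // val_prv; lia.
Qed.

Lemma active_lt h k : active h k -> (k.+1 < K)%N.
Proof. by case/andP. Qed.

Lemma active_sep h k l : active h k -> active h l -> l != k.+1 :> nat.
Proof. by rewrite /active => /andP[/eqP hk _] /andP[/eqP hl _]; apply/eqP; lia. Qed.

Lemma active_prv h k : (0 < k)%N -> active h (prv k) -> ~~ active h k.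
Proof. by move=> k0 hp; apply/negP => /(active_sep hp); rewrite val_prv; lia. Qed.

End Positions.

(* [swaps sw] is the position map of the product of the disjoint adjacent
   transpositions (k, k+1), sw k. *)
Section AdjacentSwaps.
Variables (K : nat) (sw : pred 'I_K).
Hypothesis sw_lt : forall k, sw k -> (k.+1 < K)%N.
Hypothesis sw_sep : forall k l, sw k -> sw l -> l != k.+1 :> nat.
Implicit Types k l x : 'I_K.

Definition swaps x : 'I_K :=
  if sw x then nxt x else if (0 < x)%N && sw (prv x) then prv x else x.

Lemma swaps_matched k : sw k -> swaps k = nxt k /\ swaps (nxt k) = k.
Proof.
move=> swk; have kK := sw_lt swk.
have swn : sw (nxt k) = false.
  by apply/negP => /(sw_sep swk); rewrite val_nxt ?eqxx.
by rewrite /swaps swk swn prv_nxt // swk val_nxt.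
Qed.

Lemma val_swaps x :
  swaps x = (if sw x then x.+1 else if (0 < x)%N && sw (prv x) then x.-1 else x) :> nat.
Proof.
rewrite /swaps; case swx: (sw x); first by rewrite val_nxt // sw_lt.
by case: ifP => //; rewrite val_prv.
Qed.

Lemma swapsK : involutive swaps.
Proof.
move=> x; case swx: (sw x); first by have [-> ->] := swaps_matched swx.
case: (boolP ((0 < x)%N && sw (prv x))) => [/andP[x0 swp]|nswp].
  have -> : swaps x = prv x by rewrite /swaps swx x0 swp.
  by have [-> _] := swaps_matched swp; rewrite nxt_prv.
by rewrite /swaps swx (negbTE nswp) swx (negbTE nswp).
Qed.

Lemma swaps_inj : injective swaps.
Proof. exact: inv_inj swapsK. Qed.

Lemma swaps_lt (p q : 'I_K) : (p < q)%N -> ~~ (sw p && (q == p.+1 :> nat)) ->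
  (swaps p < swaps q)%N.
Proof.
move=> pq not_adj.
have neq : swaps p != swaps q :> nat.
  by rewrite val_eqE (inj_eq swaps_inj); apply/eqP => epq; rewrite epq ltnn in pq.
have prv_q : (q != p.+1 :> nat) || (sw (prv q) == sw p).
  case: (eqVneq (q : nat) p.+1) => [e|] //=; apply/eqP; congr sw.
  by apply: val_inj; rewrite /= val_prv e.
move: neq; rewrite !val_swaps (leq_ltn_trans (leq0n p) pq) /=.
by case: (0 < p)%N; move: not_adj prv_q;
  case: (sw p); case: (sw q); case: (sw (prv p)); case: (sw (prv q)) => /=; lia.
Qed.

Lemma perm_inv_swaps (L L0 : {perm 'I_K}) :
  L =1 L0 \o swaps -> perm_inv L =1 swaps \o perm_inv L0.
Proof.
move=> HL i; apply: (@perm_inj _ L).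
by rewrite (permKV L) HL /= swapsK (permKV L0).
Qed.

End AdjacentSwaps.

Lemma eq_swaps K (sw1 sw2 : pred 'I_K) : sw1 =1 sw2 -> swaps sw1 =1 swaps sw2.
Proof. by move=> e x; rewrite /swaps !e. Qed.

Section SequentialSwaps.
Variables (K : nat) (sw : pred 'I_K).
Hypothesis sw_lt : forall k, sw k -> (k.+1 < K)%N.
Hypothesis sw_sep : forall k l, sw k -> sw l -> l != k.+1 :> nat.
Implicit Types k x : 'I_K.

Definition sw_before (m : nat) : pred 'I_K := fun l => sw l && (l < m)%N.

Lemma swaps_before_ge (m : nat) x : (m < x)%N -> swaps (sw_before m) x = x.
Proof.
move=> mx; rewrite /swaps /sw_before /= ltnNge (ltnW mx) andbF.
by case: ifP => // /and3P[_ _]; rewrite val_prv; lia.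
Qed.

Lemma swaps_before_succ k x :
  swaps (sw_before k.+1) x = swaps (sw_before k) (if sw k then tperm k (nxt k) x else x).
Proof.
have [swk|nswk] := boolP (sw k); last first.
  apply: eq_swaps => l; rewrite /sw_before.
  case: (eqVneq l k) => [->|lk]; first by rewrite (negbTE nswk).
  by rewrite ltnS leq_eqVlt val_eqE (negbTE lk).
have kK := sw_lt swk.
have before_k : sw_before k.+1 k by rewrite /sw_before swk ltnSn.
case: tpermP => [->|->|xk xnk].
- rewrite {1}/swaps before_k; apply/esym/swaps_before_ge.
  by rewrite val_nxt.
- have before_nxt : sw_before k.+1 (nxt k) = false.
    by rewrite /sw_before val_nxt // ltnn andbF.
  rewrite {1}/swaps before_nxt prv_nxt // before_k val_nxt //=.
  rewrite /swaps /sw_before ltnn andbF; case: ifP => // /and3P[k0 swp _].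
  by have := sw_sep swp swk; rewrite val_prv; lia.
- have ltx : (x < k.+1)%N = (x < k)%N.
    by rewrite ltnS leq_eqVlt val_eqE (introF eqP xk).
  rewrite /swaps /sw_before /= ltx; case: (boolP (0 < x)%N) => //= x0.
  suff -> : (prv x < k.+1)%N = (prv x < k)%N by [].
  rewrite ltnS leq_eqVlt; case: eqP => //= pk; case: xnk.
  by apply: val_inj; rewrite /= val_nxt // -pk val_prv; lia.
Qed.

Lemma swaps_before_self k :
  swaps (sw_before k) k = if (0 < k)%N && sw (prv k) then prv k else k.
Proof.
rewrite /swaps /sw_before ltnn andbF val_prv.
by case: (posnP k) => [->|k0] //=; rewrite ltn_predL k0 andbT.
Qed.

Lemma foldl_swaps (c : {perm 'I_K} -> 'I_K -> bool) (L0 : {perm 'I_K}) :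
  (forall (L : {perm 'I_K}) k, ~~ (k.+1 < K)%N -> c L k = false) ->
  (forall (L : {perm 'I_K}) k, (k.+1 < K)%N ->
     L k = L0 (if (0 < k)%N && sw (prv k) then prv k else k) ->
     L (nxt k) = L0 (nxt k) -> c L k = sw k) ->
  foldl (fun L k => if c L k then swap L k (nxt k) else L) L0 (enum 'I_K)
    =1 L0 \o swaps sw.
Proof.
move=> c_last c_sw.
suff prefix m : (m <= K)%N -> foldl (fun L k => if c L k then swap L k (nxt k) else L)
    L0 (take m (enum 'I_K)) =1 L0 \o swaps (sw_before m).
  move=> x; rewrite -(take_size (enum 'I_K)) size_enum_ord prefix //=.
  by congr (L0 _); apply: eq_swaps => l; rewrite /sw_before ltn_ord andbT.
elim: m => [|m IH] mK x.
  by rewrite take0 /= /swaps /sw_before /= !ltn0 !andbF.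
set k := Ordinal mK.
rewrite (take_nth k) ?size_enum_ord // foldl_rcons.
have -> : nth k (enum 'I_K) m = k by apply: val_inj; rewrite /= nth_enum_ord.
set L := foldl _ _ _.
have {}IH : L =1 L0 \o swaps (sw_before k) by exact: IH (ltnW mK).
rewrite /= (swaps_before_succ k x).
have [kK|kK] := boolP (k.+1 < K)%N; last first.
  by rewrite c_last // IH; case: ifP => // /sw_lt; rewrite (negbTE kK).
rewrite (c_sw L k kK); first last.
- by rewrite IH /= swaps_before_ge // val_nxt.
- by rewrite IH -(swaps_before_self k).
by case: (sw k); rewrite ?permM IH.
Qed.

End SequentialSwaps.

Section ActivePairs.
Variable K : nat.
Implicit Types k p q : 'I_K.

Lemma active_sw_lt h (sw : pred 'I_K) :
  (forall k, sw k -> active h k) -> forall k, sw k -> (k.+1 < K)%N.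
Proof. by move=> sw_act k /sw_act /active_lt. Qed.

Lemma active_sw_sep h (sw : pred 'I_K) :
  (forall k, sw k -> active h k) -> forall k l, sw k -> sw l -> l != k.+1 :> nat.
Proof. by move=> sw_act k l /sw_act hk /sw_act; apply: active_sep. Qed.

Lemma swaps_active h (sw : pred 'I_K) k :
  (forall l, sw l -> active h l) -> active h k ->
  if sw k then swaps sw k = nxt k /\ swaps sw (nxt k) = k
  else swaps sw k = k /\ swaps sw (nxt k) = nxt k.
Proof.
move=> sw_act hk; have kK := active_lt hk.
case: ifP => swk; first exact: (swaps_matched (active_sw_lt sw_act) (active_sw_sep sw_act)).
have swn : sw (nxt k) = false.
  by apply/negP => /sw_act /(active_sep hk); rewrite val_nxt ?eqxx.
rewrite /swaps swk swn prv_nxt // swk andbF; split=> //.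
by case: ifP => // /andP[k0 /sw_act /(active_prv k0)]; rewrite hk.
Qed.

Definition paired h p q : bool :=
  [exists k, active h k && ([&& p == k & q == nxt k] || [&& p == nxt k & q == k])].

Lemma pairedC h p q : paired h p q = paired h q p.
Proof.
by apply: eq_existsb => k; case: (p == k); case: (q == k); case: (p == nxt k);
  case: (q == nxt k); rewrite ?andbF.
Qed.

Lemma paired_nxt h k : (k.+1 < K)%N -> paired h k (nxt k) = active h k.
Proof.
move=> kK; apply/existsP/idP => [[l /andP[hl /orP[/andP[/eqP-> _]|]]]|hk] //.
  move=> /andP[/eqP kl /eqP nk]; move: (congr1 val kl) (congr1 val nk).
  by rewrite /= !val_nxt ?(active_lt hl) //; lia.
by exists k; rewrite hk !eqxx.
Qed.

Lemma paired_dist h p q : paired h p q -> (p.+1 == q :> nat) || (q.+1 == p :> nat).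
Proof.
case/existsP => k /andP[hk /orP[]] /andP[/eqP-> /eqP->];
  by rewrite val_nxt ?(active_lt hk) // eqxx ?orbT.
Qed.

Lemma paired_swaps h (sw : pred 'I_K) p q : (forall l, sw l -> active h l) ->
  paired h (swaps sw p) (swaps sw q) = paired h p q.
Proof.
move=> sw_act.
have imp p' q' : paired h p' q' -> paired h (swaps sw p') (swaps sw q').
  case/existsP => k /andP[hk /orP[]/andP[/eqP-> /eqP->]];
    apply/existsP; exists k; rewrite hk /=; have := swaps_active sw_act hk;
    by case: (sw k) => -[-> ->]; rewrite !eqxx ?orbT.
have swK := swapsK (active_sw_lt sw_act) (active_sw_sep sw_act).
by apply/idP/idP => [/imp|/imp//]; rewrite !swK.
Qed.

End ActivePairs.

Definition skew (T : Type) (s : T -> T -> int) := forall u v, s v u = - s u v.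

Section Statistics.
Variables (K h : nat) (L : {perm 'I_K}) (c : 'I_K -> int).

Lemma upd_stats_skew sn : skew sn.1 -> commutative sn.2 ->
  skew (upd_stats h L c sn).1 /\ commutative (upd_stats h L c sn).2.
Proof.
rewrite /upd_stats; elim: (enum 'I_K) sn => [|k ks IH] [s n] //= s_skew n_comm.
case: ifP => [/andP[/andP[_ kK] _]|_]; last exact: IH.
have ij : L k != L (nxt k).
  by rewrite (inj_eq perm_inj) -val_eqE /= val_nxt //; lia.
move: ij; set i := L k; set j := L (nxt k); set d := c k - c (nxt k) => ij.
have ji : j != i by rewrite eq_sym.
apply: IH => u v /=.
  have := s_skew u v.
  case: (boolP ((u == i) && (v == j))) => [/andP[/eqP-> /eqP->]|uvij].
    by rewrite !eqxx (negbTE ij) (negbTE ji) /=; lia.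
  case: (boolP ((u == j) && (v == i))) => [/andP[/eqP-> /eqP->]|uvji].
    by rewrite !eqxx (negbTE ij) (negbTE ji) /=; lia.
  by rewrite andbC (negbTE uvji) andbC (negbTE uvij).
by rewrite [(v == i) && _]andbC [(v == j) && _]andbC orbC n_comm.
Qed.

Lemma upd_stats_unpaired sn u v : ~~ paired h (perm_inv L u) (perm_inv L v) ->
  (upd_stats h L c sn).1 u v = sn.1 u v /\ (upd_stats h L c sn).2 u v = sn.2 u v.
Proof.
move/existsPn => unp; rewrite /upd_stats.
have posE w k : (w == L k) = (perm_inv L w == k).
  by rewrite -(inj_eq (@perm_inj _ (perm_inv L))) (permK L).
elim: (enum 'I_K) sn => [|k ks IH] [s n] //=.
case: ifP => [/andP[hk _]|_]; last exact: IH.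
rewrite (proj1 (IH _)) (proj2 (IH _)) /=.
by have := unp k; rewrite hk /= negb_or !posE => /andP[/negbTE-> /negbTE->].
Qed.

End Statistics.

Section Display.
Variables (R : realType) (K : nat) (delta : R) (Rb : {perm 'I_K}).
Variables (s : 'I_K -> 'I_K -> int) (n : 'I_K -> 'I_K -> nat).
Variables (h : nat) (bt : {ffun 'I_K -> bool}).

Definition display_sw : pred 'I_K :=
  fun k => active h k && uncertain delta s n (Rb k) (Rb (nxt k)) && bt k.

Lemma display_sw_active k : display_sw k -> active h k.
Proof. by case/andP => /andP[]. Qed.

Lemma display_swaps : display delta Rb s n h bt =1 Rb \o swaps display_sw.
Proof.
apply: (foldl_swaps (active_sw_lt display_sw_active) (active_sw_sep display_sw_active)
  (c := fun L k => active h k && uncertain delta s n (L k) (L (nxt k)) && bt k)).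
  by move=> L k kK; rewrite /active (negbTE kK) andbF.
move=> L k kK -> ->; rewrite /display_sw.
case: ifP => [/andP[k0 /display_sw_active hp]|_] //.
by rewrite (negbTE (active_prv k0 hp)).
Qed.

End Display.

Lemma thr_ge0 (R : realType) (delta : R) m : 0 <= thr delta m.
Proof. by rewrite /thr mulr_ge0 ?sqrtr_ge0. Qed.

Definition confidently_ordered (R : realType) K (delta : R) (Rb : {perm 'I_K})
    (s : 'I_K -> 'I_K -> int) (n : 'I_K -> 'I_K -> nat) :=
  forall i j, thr delta (n i j) < (s i j)%:~R -> (perm_inv Rb i < perm_inv Rb j)%N.

Section RankingUpdate.
Variables (R : realType) (K : nat) (delta : R) (h : nat) (Rb : {perm 'I_K}).
Variables (s s' : 'I_K -> 'I_K -> int) (n n' : 'I_K -> 'I_K -> nat).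
Hypothesis ordered : confidently_ordered delta Rb s n.
Hypothesis unpaired_stats : forall u v, ~~ paired h (perm_inv Rb u) (perm_inv Rb v) ->
  s' u v = s u v /\ n' u v = n u v.

Definition confident_inversion (L : 'I_K -> 'I_K) (p q : 'I_K) : bool :=
  thr delta (n' (L q) (L p)) < (s' (L q) (L p))%:~R.

Definition rerank_sw : pred 'I_K := fun k => active h k && confident_inversion Rb k (nxt k).

Lemma rerank_sw_active k : rerank_sw k -> active h k.
Proof. by case/andP. Qed.

Lemma unpaired_not_confident (p q : 'I_K) :
  (p < q)%N -> ~~ paired h q p -> ~~ confident_inversion Rb p q.
Proof.
move=> pq unp; rewrite /confident_inversion.
case: (unpaired_stats (u := Rb q) (v := Rb p)) => [|-> ->]; first by rewrite !permK.
by apply/negP => /ordered; rewrite !permK; lia.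
Qed.

Lemma upd_rbar_swaps : upd_rbar delta s' n' Rb =1 Rb \o swaps rerank_sw.
Proof.
apply: (foldl_swaps (active_sw_lt rerank_sw_active) (active_sw_sep rerank_sw_active)
  (c := fun L k => (k.+1 < K)%N && confident_inversion L k (nxt k))).
  by move=> L k kK; rewrite (negbTE kK).
move=> L k kK Lk Lnk; rewrite kK /rerank_sw {1}/confident_inversion Lk Lnk.
case: ifP => [/andP[k0 /rerank_sw_active hp]|_].
  rewrite (negbTE (active_prv k0 hp)).
  apply/negbTE/(unpaired_not_confident (p := prv k) (q := nxt k)).
    by rewrite val_nxt // val_prv; lia.
  by apply/negP => /paired_dist; rewrite val_nxt // val_prv; lia.
case hk: (active h k) => //=; apply/negbTE/unpaired_not_confident.
  by rewrite val_nxt.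
by rewrite pairedC paired_nxt // hk.
Qed.

Lemma upd_rbar_ordered : skew s' -> commutative n' ->
  confidently_ordered delta (upd_rbar delta s' n' Rb) s' n'.
Proof.
move=> s'_skew n'_comm i j conf.
have sw_lt := active_sw_lt rerank_sw_active; have sw_sep := active_sw_sep rerank_sw_active.
rewrite !(perm_inv_swaps sw_lt sw_sep upd_rbar_swaps) /=.
have [|unp] := boolP (paired h (perm_inv Rb i) (perm_inv Rb j)).
  case/existsP => k /andP[hk /orP[]/andP[/eqP ik /eqP jk]];
    have kK := active_lt hk; have := swaps_active rerank_sw_active hk;
    rewrite ik jk.
    case: ifP => [/andP[_]|_ [-> ->]]; last by rewrite val_nxt.
    rewrite /confident_inversion -jk -ik !(permKV Rb) n'_comm s'_skew intrN => conf' _.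
    by have := thr_ge0 delta (n' i j); lra.
  have -> : rerank_sw k by rewrite /rerank_sw hk /confident_inversion -ik -jk !(permKV Rb).
  by case=> -> ->; rewrite val_nxt.
have [s'E n'E] := unpaired_stats unp.
apply: swaps_lt => //; first by apply: ordered; rewrite -s'E -n'E.
apply/negP => /andP[/rerank_sw_active hp /eqP pq]; move: unp.
have -> : perm_inv Rb j = nxt (perm_inv Rb i).
  by apply: val_inj; rewrite /= val_nxt ?(active_lt hp).
by rewrite paired_nxt ?(active_lt hp) // hp.
Qed.

End RankingUpdate.

Section Trajectory.
Variables (R : realType) (K : nat) (delta : R).

Definition consistent (st : state K) :=
  [/\ confidently_ordered delta (rbar st) (sst st) (nst st), skew (sst st)
     & commutative (nst st)].

Lemma step_consistent t st bt a x : consistent st -> consistent (step delta t st bt a x).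
Proof.
case=> ordered s_skew n_comm; rewrite /step.
set h := (t %% 2)%N; set D := display _ _ _ _ _ _; set c := fun k => _.
have [s'_skew n'_comm] := @upd_stats_skew K h D c (sst st, nst st) s_skew n_comm.
set sn := upd_stats _ _ _ _.
have sw_act := @display_sw_active R K delta (rbar st) (sst st) (nst st) h bt.
have posD := perm_inv_swaps (active_sw_lt sw_act) (active_sw_sep sw_act)
  (display_swaps _ _ _ _ _ _).
have unpaired u v : ~~ paired h (perm_inv (rbar st) u) (perm_inv (rbar st) v) ->
    sn.1 u v = sst st u v /\ sn.2 u v = nst st u v.
  by move=> unp; apply: upd_stats_unpaired; rewrite !posD /= paired_swaps.
by split=> //; apply: (upd_rbar_ordered ordered unpaired).
Qed.

Lemma traj_consistent R0 coins as_ xs t : consistent (traj delta R0 coins as_ xs t).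
Proof.
elim: t => [|t IH] /=; last exact: step_consistent.
split=> [i j|u v|//]; last by rewrite oppr0.
by rewrite /thr /= mul0r sqrtr0 mulr0 ltxx.
Qed.

End Trajectory.

Lemma sum_pred_shift_le (R : numDomainType) n (f : nat -> R) : (forall m, 0 <= f m) ->
  \sum_(k < n) (if (0 < k)%N then f k.-1 else 0) <= \sum_(k < n) f k.
Proof.
case: n => [|n] f_ge0; first by rewrite !big_ord0.
by rewrite big_ord_recl big_ord_recr /= add0r lerDl.
Qed.

Lemma sum_succ_shift_le (R : numDomainType) n (f : nat -> R) : (forall m, 0 <= f m) ->
  f n = 0 -> \sum_(k < n) f k.+1 <= \sum_(k < n) f k.
Proof.
case: n => [|n] f_ge0 fn0; first by rewrite !big_ord0.
by rewrite big_ord_recr big_ord_recl /= fn0 addr0 addrC lerDl.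
Qed.

Section AttractionGap.
Variables (R : realType) (K : nat) (delta : R) (alpha : 'I_K -> R).
Hypothesis alpha_decr : forall i j : 'I_K, (i < j)%N -> alpha j < alpha i.
Variable st : state K.
Local Notation pos := (perm_inv (rbar st)).

(* The pairs of P_t are adjacent in rbar st; [P_weight m] is the term of the
   right-hand side contributed by the pair at positions m and m + 1. *)
Definition P_weight (m : nat) : R :=
  \sum_(i : 'I_K) \sum_(j : 'I_K | (i < j)%N)
    ((inP delta st i j) && (m == minn (pos i) (pos j)))%:R * (alpha i - alpha j).

Lemma pair_term_ge0 (b : bool) (i j : 'I_K) : (i < j)%N -> 0 <= b%:R * (alpha i - alpha j).
Proof. by move=> ij; rewrite mulr_ge0 ?ler0n // subr_ge0 ltW // alpha_decr. Qed.

Lemma P_weight_ge0 m : 0 <= P_weight m.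
Proof. by apply: sumr_ge0 => i _; apply: sumr_ge0 => j; apply: pair_term_ge0. Qed.

Lemma P_weight_out m : (K <= m)%N -> P_weight m = 0.
Proof.
move=> Km; apply: big1 => i _; apply: big1 => j _.
suff /negbTE-> : m != minn (pos i) (pos j) by rewrite andbF mul0r.
by have := ltn_ord (pos i); have := ltn_ord (pos j); lia.
Qed.

Lemma sum_P_weight : \sum_(m < K) P_weight m =
  \sum_(i : 'I_K) \sum_(j : 'I_K | (i < j)%N) (inP delta st i j)%:R * (alpha i - alpha j).
Proof.
rewrite /P_weight exchange_big; apply: eq_bigr => i _.
rewrite exchange_big; apply: eq_bigr => j _ /=.
have mK : (minn (pos i) (pos j) < K)%N by rewrite gtn_min ltn_ord.
rewrite (bigD1 (Ordinal mK)) //= eqxx andbT big1 ?addr0 // => m mE.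
suff /negbTE-> : m != minn (pos i) (pos j) :> nat by rewrite andbF mul0r.
by apply: contra mE => /eqP e; apply/eqP/val_inj.
Qed.

Lemma le_P_weight (i j : 'I_K) : (i < j)%N -> inP delta st i j ->
  alpha i - alpha j <= P_weight (minn (pos i) (pos j)).
Proof.
move=> ij ijP; rewrite /P_weight (bigD1 i) //= (bigD1 j) //= ijP eqxx mul1r.
rewrite -addrA lerDl addr_ge0 ?sumr_ge0 // => [l /andP[il _]|k _].
  exact: pair_term_ge0.
by apply: sumr_ge0 => l; apply: pair_term_ge0.
Qed.

Lemma le_P_weight_adjacent (p q : 'I_K) : (rbar st p < rbar st q)%N ->
  (p.+1 == q :> nat) || (q.+1 == p :> nat) ->
  uncertain delta (sst st) (nst st) (rbar st p) (rbar st q) ->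
  alpha (rbar st p) - alpha (rbar st q) <= P_weight (minn p q).
Proof.
move=> lt adj unc; have := le_P_weight lt; rewrite !(permK (rbar st)); apply.
by rewrite /inP lt unc andbT !(permK (rbar st)); apply/eqP; lia.
Qed.

Lemma P_weight_diff_ge0 (u v : 'I_K) m :
  ~~ (u < v)%N -> alpha u - alpha v <= P_weight m.
Proof.
rewrite -leqNgt leq_eqVlt => /orP[/eqP/val_inj->|vu].
  by rewrite subrr P_weight_ge0.
by apply: le_trans (P_weight_ge0 m); rewrite subr_le0 ltW // alpha_decr.
Qed.

Lemma uncertain_le_P_weight (k : 'I_K) : (k.+1 < K)%N ->
  uncertain delta (sst st) (nst st) (rbar st k) (rbar st (nxt k)) ->
  alpha (rbar st k) - alpha (rbar st (nxt k)) <= P_weight k.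
Proof.
move=> kK unc; have [lt|nlt] := boolP (rbar st k < rbar st (nxt k))%N.
  have := le_P_weight_adjacent lt; rewrite val_nxt // eqxx /=.
  have -> : minn k k.+1 = k by apply/minn_idPl.
  by apply.
exact: P_weight_diff_ge0 nlt.
Qed.

Hypothesis ordered : confidently_ordered delta (rbar st) (sst st) (nst st).

Lemma inversion_le_P_weight (k : 'I_K) :
  (k.+1 < K)%N -> alpha (rbar st (nxt k)) - alpha (rbar st k) <= P_weight k.
Proof.
move=> kK; have [lt|nlt] := boolP (rbar st (nxt k) < rbar st k)%N.
  have := le_P_weight_adjacent lt; rewrite val_nxt // eqxx orbT /=.
  have -> : minn k.+1 k = k by apply/minn_idPr.
  apply=> //; rewrite /uncertain leNgt; apply/negP => /ordered.
  by rewrite !(permK (rbar st)) val_nxt //; lia.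
exact: P_weight_diff_ge0 nlt.
Qed.

Section Displayed.
Variables (h : nat) (bt : {ffun 'I_K -> bool}).
Local Notation D := (display delta (rbar st) (sst st) (nst st) h bt).

Lemma display_gap_le (k : 'I_K) : (k.+1 < K)%N ->
  alpha (D (nxt k)) - alpha (D k) <=
  (if (0 < k)%N then P_weight k.-1 else 0) + P_weight k + P_weight k.+1.
Proof.
move=> kK; rewrite !display_swaps /=.
set sw := display_sw _ _ _ _ _ _.
have sw_act : forall l, sw l -> active h l by exact: display_sw_active.
have sw_lt := active_sw_lt sw_act; have sw_sep := active_sw_sep sw_act.
have prev_ge0 : 0 <= (if (0 < k)%N then P_weight k.-1 else 0).
  by case: ifP => _; rewrite ?P_weight_ge0.
have [swk|nswk] := boolP (sw k).
  have [-> ->] := swaps_matched sw_lt sw_sep swk.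
  have unc : uncertain delta (sst st) (nst st) (rbar st k) (rbar st (nxt k)).
    by case/andP: swk => /andP[].
  by have := uncertain_le_P_weight kK unc; have := P_weight_ge0 k.+1; lra.
have up : alpha (rbar st (swaps sw (nxt k))) - alpha (rbar st (nxt k)) <= P_weight k.+1.
  have [swn|nswn] := boolP (sw (nxt k)).
    have [-> _] := swaps_matched sw_lt sw_sep swn.
    by have := inversion_le_P_weight (sw_lt _ swn); rewrite val_nxt.
  by rewrite /swaps (negbTE nswn) prv_nxt // (negbTE nswk) andbF subrr P_weight_ge0.
have down : alpha (rbar st k) - alpha (rbar st (swaps sw k))
    <= (if (0 < k)%N then P_weight k.-1 else 0).
  rewrite /swaps (negbTE nswk); case: ifP => [/andP[k0 swp]|_]; last by rewrite subrr.
  by rewrite k0; have := inversion_le_P_weight (sw_lt _ swp); rewrite nxt_prv // val_prv.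
by have := inversion_le_P_weight kK; lra.
Qed.

Lemma attraction_gap_display_le :
  attraction_gap alpha D <= 3 * \sum_(m < K) P_weight m.
Proof.
pose T (k : 'I_K) := (if (0 < k)%N then P_weight k.-1 else 0) + P_weight k + P_weight k.+1.
have T_ge0 k : 0 <= T k by rewrite /T; case: ifP => _; rewrite ?addr_ge0 ?P_weight_ge0.
apply: (@le_trans _ _ (\sum_(k < K) T k)).
  rewrite [X in _ <= X](bigID (fun k : 'I_K => (k.+1 < K)%N)) /= -[X in X <= _]addr0.
  apply: lerD; last exact: sumr_ge0.
  by apply: ler_sum => k kK; rewrite ge_max T_ge0 andbT display_gap_le.
rewrite /T !big_split /=.
have := sum_pred_shift_le K P_weight_ge0.
have := sum_succ_shift_le P_weight_ge0 (P_weight_out (leqnn K)).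
lra.
Qed.

End Displayed.

Lemma Delta_t_le t : Delta_t delta alpha t st <=
  3 * \sum_(i : 'I_K) \sum_(j : 'I_K | (i < j)%N) (inP delta st i j)%:R * (alpha i - alpha j).
Proof.
rewrite -sum_P_weight; apply: (big_ind (fun x => x <= _)) => [|x y|bt _].
- by rewrite mulr_ge0 ?sumr_ge0 // => m _; apply: P_weight_ge0.
- by move=> xle yle; rewrite ge_max xle yle.
- exact: attraction_gap_display_le.
Qed.

End AttractionGap.

Theorem lemma3 (R : realType) (K : nat)
  (pA : Aspace K -> R) (pX : Xspace K -> R)
  (delta : R) (n : nat) (R0 : {perm 'I_K})
  (coins : nat -> {ffun 'I_K -> bool}) (as_ : nat -> Aspace K) (xs : nat -> Xspace K) :
  is_distr pA -> is_distr pX ->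
  A1 (alpha_of pA) (chi_of pX) -> A2 (chi_of pX) -> A3 (chi_of pX) ->
  A4 (alpha_of pA) (chi_of pX) -> A5 (chi_of pX) ->
  (forall i j : 'I_K, (i < j)%N -> alpha_of pA j < alpha_of pA i) ->
  (forall i : 'I_K, 0 < alpha_of pA i) ->
  0 < delta < 1 ->
  (* the realized (A_t, X_t) have positive probability under pA (x) pX *)
  (forall t, (1 <= t <= n)%N -> 0 < pA (as_ t) /\ 0 < pX (xs t)) ->
  (* the event E *)
  (forall t, (1 <= t <= n)%N ->
     E1 delta (alpha_of pA) (traj delta R0 coins as_ xs t) /\
     E2 delta (traj delta R0 coins as_ xs t)) ->
  forall t, (1 <= t <= n)%N ->
    Delta_t delta (alpha_of pA) t (traj delta R0 coins as_ xs t.-1) <=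
    3 * \sum_(i : 'I_K) \sum_(j : 'I_K | (i < j)%N)
          (inP delta (traj delta R0 coins as_ xs t.-1) i j)%:R
            * (alpha_of pA i - alpha_of pA j).
Proof.
move=> _ _ _ _ _ _ _ alpha_decr _ _ _ _ t _.
have [ordered _ _] := traj_consistent delta R0 coins as_ xs t.-1.
exact: Delta_t_le.
Qed.
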